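(* Let $p$ be an odd prime. Then $$L(p^2+1)=L(p^2-1)=\frac{p-1}{2}\cdot\frac{p^2-1}{2}.$$
   Context: For an odd prime $p$ and a positive integer $d$, define $$L(d)=\max_{1\le j\le p-1}\ \sum_{i=j}^{p-1}\left(\left\lfloor \frac{id}{p}\right\rfloor-\left\lfloor \frac{id}{p}-\left(1-\frac1p\right)\frac{jd}{p}\right\rfloor\right).$$ (This is the Booher–Cais lower bound for the $a$-number of a $\mathbb Z/p\mathbb Z$-Galois cover of curves branched at exactly one point with ramification break $d$.) *)

From mathcomp Require Import all_boot all_order all_algebra.
Import Order.TTheory GRing.Theory Num.Theory.
Local Open Scope ring_scope.

(* Summand of the Booher--Cais bound, with real floors computed in rat. *)
Definition bc_term (p d i j : nat) : int :=
  Num.floor ((i * d)%:R / p%:R : rat)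
  - Num.floor ((i * d)%:R / p%:R - (1 - p%:R^-1) * ((j * d)%:R / p%:R) : rat).

Definition bc_sum (p d j : nat) : int :=
  \sum_(j <= i < p) bc_term p d i j.

Definition L (p d : nat) : int :=
  \big[Order.max/bc_sum p d 1]_(1 <= j < p) bc_sum p d j.

From mathcomp Require Import all_boot all_order all_algebra.
From mathcomp Require Import zify ring.
Import Order.TTheory GRing.Theory Num.Theory.
Local Open Scope ring_scope.

(* For d = p^2 +- 1 and 1 <= j <= i < p both floors in a summand drop the same
   fractional part (i p - (p-1) j)/p^2 in [0, 1) (shifted by one together when
   d = p^2 - 1), so every summand equals (p-1) j.  Hence the sum for j is
   (p-1) j (p-j), and with p = 2k+1 the maximum over j, attained at j = k, is
   2k * k (k+1) = (p-1)/2 * (p^2-1)/2. *)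

Lemma floor_intr_div (R : archiRealFieldType) (N a : int) (Q : nat) : (0 < Q)%N ->
  a * Q%:Z <= N < (a + 1) * Q%:Z -> Num.floor (N%:~R / Q%:R : R) = a.
Proof.
move=> Q_gt0 /andP[lbN ubN]; apply: floor_def.
have Q_pos : (0 : R) < Q%:R by rewrite ltr0n.
rewrite ler_pdivlMr // ltr_pdivrMr // -[Q%:R]/(Q%:Z%:~R) -!intrM.
by rewrite ler_int ltr_int lbN ubN.
Qed.

Lemma bc_term_bracket (p d i j : nat) (a b : int) : (0 < p)%N ->
  a * (p ^ 2)%:Z <= (i * d * p)%:Z < (a + 1) * (p ^ 2)%:Z ->
  b * (p ^ 2)%:Z <= (i * d * p)%:Z - ((p - 1) * j * d)%:Z < (b + 1) * (p ^ 2)%:Z ->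
  bc_term p d i j = a - b.
Proof.
move=> p_gt0 bracket_a bracket_b; rewrite /bc_term.
have p_neq0 : (p%:R : rat) != 0 by rewrite pnatr_eq0 -lt0n.
have p2_gt0 : (0 < p ^ 2)%N by rewrite expn_gt0 p_gt0.
have -> : ((i * d)%:R / p%:R - (1 - p%:R^-1) * ((j * d)%:R / p%:R) : rat)
    = ((i * d * p)%:Z - ((p - 1) * j * d)%:Z)%:~R / (p ^ 2)%:R.
  by rewrite intrB -!pmulrn !natrM ?natrX natrB //; field.
have -> : ((i * d)%:R / p%:R : rat) = ((i * d * p)%:Z)%:~R / (p ^ 2)%:R.
  by rewrite -pmulrn !natrM ?natrX; field.
by rewrite (floor_intr_div _ _ _ _ p2_gt0 bracket_a)
           (floor_intr_div _ _ _ _ p2_gt0 bracket_b).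
Qed.

Lemma bc_term_sqr_add1 (p i j : nat) : (1 <= j)%N -> (j <= i)%N -> (i < p)%N ->
  bc_term p (p ^ 2 + 1) i j = ((p - 1) * j)%:Z.
Proof.
move=> j_ge1 j_le_i i_lt_p.
rewrite (bc_term_bracket _ _ _ _ ((i * p)%:Z) ((i * p)%:Z - ((p - 1) * j)%:Z));
  first lia; first lia; apply/andP; split; nia.
Qed.

Lemma bc_term_sqr_sub1 (p i j : nat) : (1 <= j)%N -> (j <= i)%N -> (i < p)%N ->
  bc_term p (p ^ 2 - 1) i j = ((p - 1) * j)%:Z.
Proof.
move=> j_ge1 j_le_i i_lt_p.
rewrite (bc_term_bracket _ _ _ _ ((i * p)%:Z - 1)
                         ((i * p)%:Z - ((p - 1) * j)%:Z - 1));
  first lia; first lia; apply/andP; split; nia.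
Qed.

Lemma bc_sum_const (p d j : nat) (c : int) :
  (forall i, (j <= i)%N -> (i < p)%N -> bc_term p d i j = c) ->
  bc_sum p d j = c *+ (p - j).
Proof.
move=> const_term; rewrite /bc_sum big_nat_cond.
rewrite (eq_bigr (fun _ => c)); last by move=> i /andP[/andP[? ?] _]; exact: const_term.
by rewrite -big_nat_cond sumr_const_nat.
Qed.

Lemma mul_subn_le_consecutive (k j : nat) : (j <= 2 * k + 1)%N ->
  (j * (2 * k + 1 - j) <= k * (k + 1))%N.
Proof.
move=> j_le; case: (leqP j k) => [j_le_k | k_lt_j].
- have [t ->] : exists t, k = (j + t)%N by exists (k - j)%N; lia.
  nia.
- have [t ->] : exists t, j = (k + 1 + t)%N by exists (j - k - 1)%N; lia.
  nia.
Qed.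

Lemma L_linear_terms (p d : nat) : odd p -> (3 <= p)%N ->
  (forall i j, (1 <= j)%N -> (j <= i)%N -> (i < p)%N ->
     bc_term p d i j = ((p - 1) * j)%:Z) ->
  L p d = ((p - 1) %/ 2 * ((p ^ 2 - 1) %/ 2))%:Z.
Proof.
move=> p_odd p_ge3 linear_term.
set k := p./2.
have p_eq : p = (2 * k + 1)%N.
  by rewrite -{1}(odd_double_half p) p_odd -muln2 mulnC addnC.
have -> : ((p - 1) %/ 2 = k)%N by rewrite {1}p_eq; lia.
have -> : ((p ^ 2 - 1) %/ 2 = 2 * k * (k + 1))%N.
  by rewrite (_ : p ^ 2 - 1 = 2 * k * (k + 1) * 2)%N ?mulnK // p_eq; nia.
have sumE j : (1 <= j)%N -> (j < p)%N ->
    bc_sum p d j = (2 * k * (j * (2 * k + 1 - j)))%:Z.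
  move=> j_ge1 j_lt_p.
  rewrite (bc_sum_const _ _ _ ((p - 1) * j)%:Z) => [|i ? ?]; last exact: linear_term.
  by rewrite -mulr_natr natz -PoszM; congr Posz; rewrite p_eq; nia.
have sum_le j : (1 <= j)%N -> (j < p)%N -> bc_sum p d j <= (k * (2 * k * (k + 1)))%:Z.
  move=> j_ge1 j_lt_p; rewrite sumE // lez_nat [in X in (_ <= X)%N]mulnCA leq_mul2l.
  by rewrite mul_subn_le_consecutive ?orbT //; lia.
rewrite /L; apply/le_anti/andP; split.
- rewrite big_nat_cond; apply: bigmax_le; first by apply: sum_le; lia.
  by move=> j /andP[/andP[? ?] _]; apply: sum_le.
- apply: (@bigmax_sup_seq _ _ _ _ _ k) => //; first by rewrite mem_index_iota; lia.
  by rewrite sumE; [rewrite lez_nat; nia | lia | lia].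
Qed.

Theorem mainTheorem1 (p : nat) (hp : prime p) (hodd : odd p) :
  L p (p ^ 2 + 1) = ((p - 1) %/ 2 * ((p ^ 2 - 1) %/ 2))%:Z /\
  L p (p ^ 2 - 1) = ((p - 1) %/ 2 * ((p ^ 2 - 1) %/ 2))%:Z.
Proof.
have p_ge3 : (3 <= p)%N.
  have := prime_gt1 hp; case: p hodd {hp} => [|[|[|]]] //.
split; apply: L_linear_terms => // i j.
- exact: bc_term_sqr_add1.
- exact: bc_term_sqr_sub1.
Qed.
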